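(* Let $T$ be a tree of diameter $d$ on $n$ vertices with maximum Wiener index. Let $x$ be a special vertex of $T$ and let $T_1,T_2$ be components of $T-x$ such that each of them contains exactly one broom vertex of $T$ and $d(y,y')<d$ for all leaves $y\in V(T_1)$, $y'\in V(T_2)$. Let $y_1\in V(T_1)$, $y_2\in V(T_2)$ be leaves of $T$, $y_1'$ the broom vertex adjacent to $y_1$, $p=d(x,y_1)=d(x,y_2)$, and $t_i$ the number of leaves of $T$ in $T_i$ ($i\in\{1,2\}$). Let $T'=T_2\xrightarrow{T} y_1'$. If $t_1=t_2+1$, then $W(T)\geq W(T')$ if and only if $$t_1\geq \sqrt{\frac{p(3n+2p-7)+3}{12}}-p+\frac32.$$
   Context: All graphs are finite and simple; $d(u,v)$ denotes distance and $W(G)=\sum_{\{u,v\}\subseteq V(G)} d(u,v)$ is the Wiener index. A tree $T$ of order $n$ and diameter $d$ has maximum Wiener index if $W(T')\leq W(T)$ for every tree $T'$ of order $n$ and diameter $d$. A leaf is a vertex of degree $1$; a broom vertex of $T$ is a vertex adjacent to a leaf of $T$. A vertex $x$ of a tree $T$ of diameter $d$ is special if $\deg(x)\geq 3$ and there exist components $T_1,T_2$ of $T-x$ such that each contains exactly one broom vertex of $T$ and $d(y,y')<d$ for all leaves $y\in V(T_1)$, $y'\in V(T_2)$. For such $x,T_1,T_2$ and the broom vertex $y_1'$ of $T_1$, the tree $T_2\xrightarrow{T} y_1'$ is obtained from $T$ by deleting all vertices of $T_2$ and attaching $|V(T_2)|$ new leaves to $y_1'$. *)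

From HB Require Import structures.
From mathcomp Require Import all_boot all_order all_algebra.
Set Implicit Arguments. Unset Strict Implicit. Unset Printing Implicit Defensive.
Import Order.TTheory GRing.Theory Num.Theory.

Section Graph.
Variable T : finType.
Implicit Type e : rel T.

Definition simple_graph e := irreflexive e /\ symmetric e.

Definition connected e := forall x y : T, connect e x y.

Definition acyclic e :=
  forall (x : T) (s : seq T), uniq (x :: s) -> path e x s -> 2 <= size s ->
    ~~ e (last x s) x.

Definition is_tree e := [/\ simple_graph e, connected e & acyclic e].

Fixpoint ball e (k : nat) (x : T) : {set T} :=
  match k with
  | 0 => [set x]
  | k'.+1 => ball e k' x :|: [set z | [exists w in ball e k' x, e w z]]
  end.

(* graph distance: least k with y within k steps of x (only used on
   connected graphs, where this k is < #|T|) *)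
Definition dist e (x y : T) : nat :=
  find (fun k => y \in ball e k x) (iota 0 #|T|).

Definition deg e (x : T) : nat := #|[set y | e x y]|.
Definition leaf e (x : T) : bool := deg e x == 1.
Definition broom e (x : T) : bool := [exists y, e x y && leaf e y].

Definition diameter e : nat := \max_(u : T) \max_(v : T) dist e u v.

(* Wiener index: sum over unordered pairs = half the sum over ordered pairs *)
Definition wiener e : nat := (\sum_(u : T) \sum_(v : T) dist e u v) %/ 2.

Definition del e (x : T) : rel T := [rel a b | [&& e a b, a != x & b != x]].

Definition component e (x v : T) : {set T} := [set w | connect (del e x) v w].

Definition is_component e (x : T) (C : {set T}) :=
  exists2 v, v != x & C = component e x v.

Definition leaves e (C : {set T}) : {set T} := [set y in C | leaf e y].

Definition one_broom e (C : {set T}) := #|[set b in C | broom e b]| = 1.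

Definition special e (x : T) :=
  3 <= deg e x /\
  exists C1 C2 : {set T},
    [/\ is_component e x C1, is_component e x C2, C1 != C2,
        one_broom e C1 /\ one_broom e C2 &
        forall y y', y \in leaves e C1 -> y' \in leaves e C2 ->
          dist e y y' < diameter e].

(* T_2 -->^T y : delete the vertices of C2 and attach |C2| new leaves to y.
   Modelled on the same vertex set: each vertex of C2 becomes a leaf
   attached to y, all other adjacencies are those of T. *)
Definition move_tree e (C2 : {set T}) (y : T) : rel T :=
  [rel a b | if a \in C2 then b == y else if b \in C2 then a == y else e a b].

End Graph.

Definition max_wiener (T : finType) (e : rel T) :=
  is_tree e /\
  forall (U : finType) (f : rel U),
    is_tree f -> #|U| = #|T| -> diameter f = diameter e -> wiener f <= wiener e.

From HB Require Import structures.
From mathcomp Require Import all_boot all_order all_algebra.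
From mathcomp Require Import zify ring lra.
Import Order.TTheory GRing.Theory Num.Theory.

Set Implicit Arguments.
Unset Strict Implicit.
Unset Printing Implicit Defensive.

(* A component of T - x with a single broom vertex b is a broom: the path from b
   towards x, with all leaves of the component hanging from b.  Moving C2 onto
   y1' changes only the distances with an endpoint in C2, and every sum involved
   is a polynomial in the common depth q of the two broom vertices, the number t
   of leaves of C2 and n = #|T|.  Comparing the sums of ordered distances (both
   even) reduces W(T') <= W(T) to (q+1)(3n+2q-5) <= 12(q+t)(q+t+1), which is the
   stated bound for p = q+1 and t1 = t+1. *)

Section Distance.
Variables (T : finType) (e : rel T).
Local Notation d := (dist e).

Lemma dist_le_ball u v k : v \in ball e k u -> d u v <= k.
Proof.
move=> vB; rewrite /dist; case: (ltnP k #|T|) => ltkT.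
  by rewrite leqNgt; apply/negP => /(before_find 0); rewrite nth_iota // add0n vB.
by apply: leq_trans (find_size _ _) _; rewrite size_iota.
Qed.

Lemma dist_leT u v : d u v <= #|T|.
Proof. by rewrite /dist -{2}(size_iota 0 #|T|) find_size. Qed.

Lemma ball_dist u v : d u v < #|T| -> v \in ball e (d u v) u.
Proof.
rewrite /dist => lt_dT; have := lt_dT.
by rewrite -{2}(size_iota 0 #|T|) -has_find => /(nth_find 0); rewrite nth_iota ?add0n.
Qed.

Lemma dist_xx u : d u u = 0.
Proof. by apply/eqP; rewrite -leqn0 dist_le_ball //= in_set1. Qed.

Lemma dist_eq0 u v : (d u v == 0) = (u == v).
Proof.
apply/eqP/eqP => [d0 | <-]; last exact: dist_xx.
have : d u v < #|T| by rewrite d0; apply/card_gt0P; exists u.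
by move/ball_dist; rewrite d0 in_set1 => /eqP.
Qed.

Lemma ball_edge k u a b : a \in ball e k u -> e a b -> b \in ball e k.+1 u.
Proof. by move=> aB ab; rewrite /= !inE; apply/orP; right; apply/existsP; exists a; rewrite aB. Qed.

Lemma ball_edge_l k u a b : e u a -> b \in ball e k a -> b \in ball e k.+1 u.
Proof.
move=> ua; elim: k b => [|k IHk] b bB; rewrite /= inE in bB.
  by rewrite (eqP bB); apply: (ball_edge _ ua); rewrite /= in_set1.
case/orP: bB => [/IHk bB | ]; first by rewrite /= inE bB.
by rewrite inE => /existsP [c /andP [/IHk cB cb]]; exact: ball_edge cB cb.
Qed.

Lemma path_ball u s : path e u s -> last u s \in ball e (size s) u.
Proof.
elim/last_ind: s => [|s a IHs]; first by rewrite /= in_set1.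
by rewrite rcons_path last_rcons size_rcons => /andP [/IHs sB]; exact: ball_edge.
Qed.

Lemma ball_connect k u v : v \in ball e k u -> connect e u v.
Proof.
elim: k v => [|k IHk] v /=; first by rewrite in_set1 => /eqP ->.
rewrite inE => /orP [/IHk // | ]; rewrite inE => /existsP [a /andP [aB av]].
exact: connect_trans (IHk _ aB) (connect1 av).
Qed.

Lemma connect_dist_lt u v : connect e u v -> d u v < #|T|.
Proof.
case/connectP => s uv ->; case: (shortenP uv) => s' uv' uniq_s' _.
apply: leq_ltn_trans (dist_le_ball (path_ball uv')) _.
by move/card_uniqP: uniq_s' => /= <-; exact: max_card.
Qed.

Lemma dist_edge u a b : e a b -> d u b <= (d u a).+1.
Proof.
move=> ab; case: (ltnP (d u a) #|T|) => [/ball_dist aB | leTd].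
  exact/dist_le_ball/(ball_edge aB).
exact: leq_trans (dist_leT _ _) (leqW leTd).
Qed.

(* Every lower bound on a distance below comes from a potential [f] that grows by
   at most one along each edge. *)
Lemma ball_lipschitz (f : T -> nat) u k w :
  (forall a b, e a b -> f b <= (f a).+1) -> w \in ball e k u -> f w <= f u + k.
Proof.
move=> f_lip; elim: k w => [|k IHk] w /=; first by rewrite in_set1 addn0 => /eqP ->.
rewrite inE => /orP [/IHk | ]; first lia.
rewrite inE => /existsP [a /andP [/IHk aB /f_lip]]; lia.
Qed.

Lemma dist_lipschitz (f : T -> nat) u v :
  (forall a b, e a b -> f b <= (f a).+1) -> d u v < #|T| -> f v <= f u + d u v.
Proof. by move=> f_lip /ball_dist; exact: ball_lipschitz. Qed.

Lemma dist_triangle u v w : d v w < #|T| -> d u w <= d u v + d v w.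
Proof. by apply: dist_lipschitz => a b; exact: dist_edge. Qed.

Hypothesis e_sym : symmetric e.

Lemma ball_sym k u v : (v \in ball e k u) = (u \in ball e k v).
Proof.
suff ball_symr k' u' v' : v' \in ball e k' u' -> u' \in ball e k' v'.
  by apply/idP/idP; exact: ball_symr.
elim: k' u' v' => [|k' IHk] u' v' /=; first by rewrite !in_set1 eq_sym.
rewrite inE => /orP [/IHk vB | ]; first by rewrite inE vB.
rewrite inE => /existsP [a /andP [/IHk aB av]].
by apply: ball_edge_l aB; rewrite e_sym.
Qed.

Lemma dist_sym u v : d u v = d v u.
Proof.
suff le_d a b : d b a <= d a b by apply/eqP; rewrite eqn_leq !le_d.
case: (ltnP (d a b) #|T|) => [/ball_dist | ]; first by rewrite ball_sym => /dist_le_ball.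
exact: leq_trans (dist_leT _ _).
Qed.

End Distance.

Section Leaves.
Variables (T : finType) (e : rel T).

Lemma leaf_adj l : leaf e l -> exists z, e l z.
Proof. by case/cards1P => z zP; exists z; have := set11 z; rewrite -zP inE. Qed.

Lemma leaf_adj_eq l a b : leaf e l -> e l a -> e l b -> a = b.
Proof.
case/cards1P => z zP la lb.
have : a \in [set y | e l y] by rewrite inE.
have : b \in [set y | e l y] by rewrite inE.
by rewrite zP !in_set1 => /eqP -> /eqP ->.
Qed.

Lemma leaves_leaf (C : {set T}) l : l \in leaves e C -> leaf e l.
Proof. by rewrite inE => /andP []. Qed.

Lemma nonleaf_adj_neq w a : e w a -> ~~ leaf e w -> exists2 z, e w z & z != a.
Proof.
move=> wa wNleaf; have : ~~ ([set y | e w y] \subset [set a]).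
  apply: contra wNleaf => sub; rewrite /leaf /deg eqn_leq.
  rewrite (leq_trans (subset_leq_card sub)) ?cards1 //.
  by apply/card_gt0P; exists a; rewrite inE.
by case/subsetPn => z; rewrite !inE => wz za; exists z.
Qed.

Hypotheses (e_irr : irreflexive e) (e_sym : symmetric e) (e_conn : connected e).

Lemma dist_leaf u l b : leaf e l -> e l b -> u != l -> dist e u l = (dist e u b).+1.
Proof.
move=> l_leaf lb ul; apply/eqP; rewrite eqn_leq dist_edge 1?e_sym //=.
pose f w := if w == l then (dist e u b).+1 else dist e u w.
have := dist_lipschitz (f := f) _ (connect_dist_lt (e_conn u l)).
rewrite /f eqxx (negbTE ul) dist_xx; apply => a c ac.
case: (eqVneq a l) => [al | aNl]; case: (eqVneq c l) => [cl | cNl].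
- by move: ac; rewrite al cl e_irr.
- by rewrite al in ac; rewrite -(leaf_adj_eq l_leaf lb ac) leqW.
- by rewrite cl e_sym in ac; rewrite (leaf_adj_eq l_leaf lb ac).
- exact: dist_edge.
Qed.

End Leaves.

Section Deletion.
Variables (T : finType) (e : rel T) (w : T).
Hypothesis e_sym : symmetric e.

Lemma del_sub : subrel (del e w) e.
Proof. by move=> a b /andP []. Qed.

Lemma del_sym : symmetric (del e w).
Proof. by move=> a b; rewrite /del /= e_sym [(a != w) && _]andbC. Qed.

Lemma connect_del_sym : connect_sym (del e w).
Proof. exact: sym_connect_sym del_sym. Qed.

Lemma path_del_notin a s : path (del e w) a s -> w \notin s.
Proof.
elim: s a => [|c s IHs] a //= /andP [ac /IHs wNs].
by move: ac; rewrite inE negb_or wNs andbT /del /= => /and3P [_ _]; rewrite eq_sym.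
Qed.

End Deletion.

Section Components.
Variables (T : finType) (e : rel T) (x v : T).
Hypotheses (e_sym : symmetric e) (vNx : v != x).
Local Notation C := (component e x v).

Lemma component_neq w : w \in C -> w != x.
Proof.
rewrite inE => /connectP [s vs ->]; elim/last_ind: s vs => [|s a _] //=.
by rewrite rcons_path last_rcons => /andP [_ /and3P []].
Qed.

Lemma component_edge w z : w \in C -> e w z -> z != x -> z \in C.
Proof.
move=> wC wz zNx; have wNx := component_neq wC.
by move: wC; rewrite !inE => vw; apply: connect_trans vw (connect1 _); rewrite /del /= wz wNx.
Qed.

Lemma component_separates w z : w \in C -> z \notin C -> e w z -> z = x.
Proof. by move=> wC zNC wz; apply/eqP; apply: contraNT zNC => /(component_edge wC wz). Qed.

Lemma component_eq w : w \in C -> component e x w = C.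
Proof.
rewrite inE => vw; apply/setP => z; rewrite !inE; apply/idP/idP => [wz | vz].
  exact: connect_trans vw wz.
by apply: connect_trans vz; rewrite connect_del_sym.
Qed.

End Components.

Section Tree.
Variables (T : finType) (e : rel T) (x : T).
Hypothesis e_tree : is_tree e.

Let e_irr : irreflexive e. Proof. by case: e_tree => [[]]. Qed.
Let e_sym : symmetric e. Proof. by case: e_tree => [[]]. Qed.
Let e_conn : connected e. Proof. by case: e_tree. Qed.
Let e_acyc : acyclic e. Proof. by case: e_tree. Qed.

Local Notation depth := (dist e x).

Lemma depth_lt z : depth z < #|T|.
Proof. exact: connect_dist_lt. Qed.

Lemma depth_eq0 z : (depth z == 0) = (z == x).
Proof. by rewrite dist_eq0 eq_sym. Qed.

Lemma exists_parent z : z != x -> exists y, e y z && ((depth y).+1 == depth z).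
Proof.
move=> zNx; have := ball_dist (depth_lt z).
case dz: (depth z) => [|k]; first by move/eqP: dz; rewrite depth_eq0 (negbTE zNx).
rewrite /= inE => /orP [/dist_le_ball | ]; first lia.
rewrite inE => /existsP [y /andP [yB yz]]; exists y; rewrite yz /=.
by have := dist_le_ball yB; have := dist_edge x yz; rewrite dz; lia.
Qed.

(* The root is its own parent. *)
Definition parent z := odflt z [pick y | e y z && ((depth y).+1 == depth z)].

Lemma parentP z : z != x -> e (parent z) z /\ (depth (parent z)).+1 = depth z.
Proof.
move=> zNx; rewrite /parent; case: pickP => [y /andP [yz /eqP //] | noP].
by have [y] := exists_parent zNx; rewrite noP.
Qed.

Lemma connect_del_root w z : z != w -> depth z <= depth w -> connect (del e w) z x.
Proof.
have [k] := ubnP (depth z); elim: k z => // k IHk z lt_zk zNw le_zw.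
have [-> | zNx] := eqVneq z x; first exact: connect0.
have [yz dy] := parentP zNx; set y := parent z in yz dy *.
have yNw : y != w by apply: contraTneq le_zw => <-; rewrite -dy ltnn.
apply: connect_trans (connect1 _) (IHk y _ yNw _); last 2 first.
- by rewrite -dy in lt_zk.
- by rewrite -dy in le_zw; exact: ltnW.
by rewrite /del /= e_sym yz zNw.
Qed.

Lemma tree_parent_unique w z1 z2 :
  e w z1 -> e w z2 -> depth z1 <= depth w -> depth z2 <= depth w -> z1 = z2.
Proof.
(* Otherwise z1 and z2 are joined through the root in T - w, closing a cycle at w. *)
move=> wz1 wz2 le1 le2; case: (eqVneq z1 z2) => // neq12; exfalso.
have zNw z : e w z -> z != w by move=> wz; apply: contraTneq wz => ->; rewrite e_irr.
have : connect (del e w) z1 z2.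
  apply: connect_trans (connect_del_root (zNw _ wz1) le1) _.
  by rewrite connect_del_sym // connect_del_root ?zNw.
case/connectP => s p12 def_z2; rewrite {}def_z2 in neq12 wz2.
move: neq12 wz2; case: (shortenP p12) => s' p' uniq' _ neq12 wz2.
have cycle_uniq : uniq (w :: z1 :: s').
  by rewrite [uniq _]/= inE negb_or eq_sym zNw //= (path_del_notin p').
have cycle_path : path e w (z1 :: s') by rewrite /= wz1 (sub_path (@del_sub _ e w) p').
have cycle_size : 1 < size (z1 :: s').
  by case: s' {p' uniq' cycle_uniq cycle_path} neq12 {wz2} => //=; rewrite eqxx.
by move/negP: (e_acyc cycle_uniq cycle_path cycle_size); rewrite /= e_sym.
Qed.

Lemma parent_unique w z : e w z -> (depth w).+1 = depth z -> w = parent z.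
Proof.
move=> wz dw; have zNx : z != x by rewrite -depth_eq0 -dw.
have [pz dpz] := parentP zNx.
have zw : e z w by rewrite e_sym.
have zpz : e z (parent z) by rewrite e_sym.
by apply: (tree_parent_unique zw zpz); [rewrite -dw | rewrite -dpz].
Qed.

Lemma exists_child w : w != x -> ~~ leaf e w -> exists2 z, e w z & depth z = (depth w).+1.
Proof.
move=> wNx wNleaf; have [pw dpw] := parentP wNx.
have wpw : e w (parent w) by rewrite e_sym.
have [z wz zNp] := nonleaf_adj_neq wpw wNleaf.
exists z => //; have := dist_edge x wz; rewrite leq_eqVlt => /orP [/eqP // | lt_zw].
case/negP: zNp; apply/eqP; apply: (tree_parent_unique wz wpw) => //.
by rewrite -dpw.
Qed.

Lemma depth_iter_parent z k : k <= depth z -> depth (iter k parent z) = depth z - k.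
Proof.
elim: k => [|k IHk] le_kz /=; first by rewrite subn0.
have dk := IHk (ltnW le_kz).
have kNx : iter k parent z != x by rewrite -depth_eq0 dk; lia.
by have [_] := parentP kNx; lia.
Qed.


Lemma iter_parent_neq_root z k : k < depth z -> iter k parent z != x.
Proof. by move=> lt_kz; rewrite -depth_eq0 depth_iter_parent 1?ltnW //; lia. Qed.

Lemma edge_iter_parent z k : k < depth z -> e (iter k.+1 parent z) (iter k parent z).
Proof. by move=> /iter_parent_neq_root /parentP []. Qed.

Lemma nonleaf_of_child w z : w != x -> e w z -> depth z = (depth w).+1 -> ~~ leaf e w.
Proof.
move=> wNx wz dz; have [pw dpw] := parentP wNx; apply/negP => w_leaf.
have pwz : parent w = z by apply: leaf_adj_eq w_leaf _ wz; rewrite e_sym.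
by move: dpw; rewrite pwz dz; lia.
Qed.

End Tree.

Lemma sum_ord_id q : 2 * \sum_(k < q) k + q = q * q.
Proof.
elim: q => [|q IHq]; rewrite ?big_ord0 // big_ord_recr /=.
by move: IHq; set S := \sum_(k < q) k; nia.
Qed.

Lemma sum_ord_succ q : 2 * \sum_(k < q) k.+1 = q * q.+1.
Proof.
elim: q => [|q IHq]; rewrite ?big_ord0 // big_ord_recr /=.
by move: IHq; set S := \sum_(k < q) k.+1; nia.
Qed.

Lemma sum_ord_rsub q : 2 * \sum_(k < q) (q - k) = q * q.+1.
Proof.
elim: q => [|q IHq]; rewrite ?big_ord0 // big_ord_recl subn0.
under eq_bigr do rewrite subSS.
by move: IHq; set S := \sum_(k < q) (q - k); nia.
Qed.

Lemma sum_ord_distn q : 3 * \sum_(i < q) \sum_(j < q) ((i - j) + (j - i)) + q = q ^ 3.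
Proof.
elim: q => [|q IHq]; first by rewrite big_ord0.
rewrite big_ord_recr /=.
under eq_bigr => i _ do rewrite big_ord_recr /= (eqP (ltnW (ltn_ord i))) add0n.
rewrite big_ord_recr /= subnn big_split /=.
rewrite [X in _ + (X + _)](eq_bigr (fun i : 'I_q => q - i)) => [|i _].
  have := sum_ord_rsub q.
  by move: IHq; set S := \sum_(i < q) \sum_(j < q) _; set S1 := \sum_(i < q) (q - i); nia.
by rewrite (eqP (ltnW (ltn_ord i))) addn0.
Qed.

Lemma sum_offdiag_const (T : finType) (A : {set T}) (F : T -> nat) a c :
  a \in A -> F a = 0 -> {in A, forall a', a' != a -> F a' = c} ->
  \sum_(a' in A) F a' = c * #|A|.-1.
Proof.
move=> aA Fa0 Fc; rewrite (bigD1 a) //= Fa0 add0n (cardD1 a A) aA add1n mulnC.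
rewrite -sum_nat_const; apply: eq_big => [a' | a' /andP [a'A a'Na]]; last exact: Fc.
by rewrite !inE andbC.
Qed.

Section Broom.
Variables (T : finType) (e : rel T) (x v b : T).
Hypothesis e_tree : is_tree e.
Hypotheses (xNleaf : ~~ leaf e x) (vNx : v != x).
Local Notation C := (component e x v).
Local Notation L := (leaves e C).
Hypotheses (C_broom : one_broom e C) (bC : b \in C) (b_broom : broom e b).
Local Notation d := (dist e).
Local Notation depth := (dist e x).
Local Notation q := (depth b).
(* [spine k] is k steps from b towards x; C consists of the [spine k] with
   [k < q] and of the leaves, all adjacent to b. *)
Local Notation spine k := (iter k (parent e x) b).

Let e_irr : irreflexive e. Proof. by case: e_tree => [[]]. Qed.
Let e_sym : symmetric e. Proof. by case: e_tree => [[]]. Qed.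
Let e_conn : connected e. Proof. by case: e_tree. Qed.

Lemma broom_vertex_eq w : w \in C -> broom e w -> w = b.
Proof.
move/eqP/cards1P: C_broom => [c cP] wC w_broom.
have : w \in [set w in C | broom e w] by rewrite inE wC.
have : b \in [set w in C | broom e w] by rewrite inE bC.
by rewrite cP !in_set1 => /eqP -> /eqP ->.
Qed.

Lemma leaf_adj_broom l : l \in L -> e l b.
Proof.
(* A leaf hanging from x would be alone in its component, hence the broom vertex
   of C, and x would be a leaf. *)
rewrite inE => /andP [lC l_leaf]; have [z lz] := leaf_adj l_leaf.
have zNx : z != x.
  apply/eqP => zx; rewrite {z}zx in lz; case/negP: xNleaf.
  have : b \in component e x l by rewrite (component_eq e_sym lC).
  rewrite inE => /connectP [[|c s] /= p bl].
    case/existsP: b_broom => y /andP [b_y y_leaf].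
    by rewrite bl in b_y; rewrite (leaf_adj_eq l_leaf lz b_y).
  case/andP: p => /and3P [lc _ cNx] _.
  by case/eqP: cNx; exact: leaf_adj_eq l_leaf lc lz.
have z_broom : broom e z by apply/existsP; exists l; rewrite e_sym lz l_leaf.
by rewrite -(broom_vertex_eq (component_edge vNx lC lz zNx) z_broom).
Qed.

Lemma depth_leaf l : l \in L -> depth l = q.+1.
Proof.
move=> lL; have := lL; rewrite inE => /andP [lC l_leaf].
rewrite (dist_leaf e_irr e_sym e_conn l_leaf (leaf_adj_broom lL)) //.
by rewrite eq_sym (component_neq vNx lC).
Qed.

Lemma depth_broom_gt0 : 0 < q.
Proof. by rewrite lt0n dist_eq0 eq_sym (component_neq vNx bC). Qed.

Lemma depth_spine k : k <= q -> depth (spine k) = q - k.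
Proof. exact: (depth_iter_parent e_tree). Qed.

Lemma edge_spine k : k < q -> e (spine k) (spine k.+1).
Proof. by move=> lt_kq; rewrite e_sym (edge_iter_parent e_tree). Qed.

Lemma spine_in k : k < q -> spine k \in C.
Proof.
elim: k => [|k IHk] lt_kq //; have lt_k := ltnW lt_kq.
exact: (component_edge vNx (IHk lt_k) (edge_spine lt_k) (iter_parent_neq_root e_tree lt_kq)).
Qed.

Lemma spine_nonleaf k : k < q -> ~~ leaf e (spine k).
Proof.
case: k => [_ | k lt_kq] /=.
  case/existsP: b_broom => y /andP [b_y y_leaf].
  have yNx : y != x by apply: contraNneq xNleaf => <-.
  have yL : y \in L by rewrite inE y_leaf (component_edge vNx bC b_y yNx).
  exact: (nonleaf_of_child e_tree (component_neq vNx bC) b_y (depth_leaf yL)).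
have lt_k := ltnW lt_kq; have spine_edge : e (spine k.+1) (spine k) by rewrite e_sym edge_spine.
apply: (nonleaf_of_child e_tree (iter_parent_neq_root e_tree lt_kq) spine_edge).
by rewrite !depth_spine 1?ltnW //; lia.
Qed.

Lemma nonleaf_spine w : w \in C -> ~~ leaf e w -> exists2 k, k < q & w = spine k.
Proof.
(* Walk away from x through children: the last non-leaf before a leaf is b. *)
have [m] := ubnP (#|T| - depth w); elim: m w => // m IHm w lt_wm wC wNleaf.
have wNx := component_neq vNx wC; have [z wz dz] := exists_child e_tree wNx wNleaf.
have zNx : z != x by apply/eqP => zx; move: dz; rewrite zx dist_xx.
have zC := component_edge vNx wC wz zNx.
have [z_leaf | zNleaf] := boolP (leaf e z).
  have w_broom : broom e w by apply/existsP; exists z; rewrite wz.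
  by exists 0; rewrite ?depth_broom_gt0 ?(broom_vertex_eq wC w_broom).
have lt_zT := connect_dist_lt (e_conn x z).
have [|k lt_kq zk] := IHm z _ zC zNleaf.
  by rewrite dz subnS -ltnS prednK // subn_gt0 -dz ltnW.
have wk : w = spine k.+1 by rewrite /= -zk; exact: (parent_unique e_tree).
exists k.+1 => //.
by rewrite ltnNge -subn_eq0 -depth_spine // -wk dist_eq0 eq_sym.
Qed.

Lemma dist_spine_le i m : i + m <= q -> d (spine i) (spine (i + m)) <= m.
Proof.
elim: m => [|m IHm] le_q; first by rewrite addn0 dist_xx.
rewrite addnS in le_q *; apply: leq_trans (dist_edge _ (edge_spine le_q)) _.
by rewrite ltnS IHm // ltnW.
Qed.

Lemma dist_spine i j : i <= q -> j <= q -> d (spine i) (spine j) = (i - j) + (j - i).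
Proof.
wlog le_ij : i j / i <= j => [hwlog le_iq le_jq | le_iq le_jq].
  case/orP: (leq_total i j) => [le_ij | le_ji]; first exact: hwlog.
  by rewrite dist_sym // addnC; apply: hwlog.
rewrite (eqP le_ij) add0n; apply/eqP; rewrite eqn_leq.
rewrite -{1}(subnKC le_ij) dist_spine_le ?subnKC //=.
have := @dist_triangle _ e x (spine j) (spine i) (connect_dist_lt (e_conn _ _)).
by rewrite [d (spine j) _]dist_sym // !depth_spine //; lia.
Qed.

Lemma dist_spine_leaf k l : k < q -> l \in L -> d (spine k) l = k.+1.
Proof.
move=> lt_kq lL; have spineNl : spine k != l.
  by apply: contraNneq (spine_nonleaf lt_kq) => ->; exact: (leaves_leaf lL).
rewrite (dist_leaf e_irr e_sym e_conn (leaves_leaf lL) (leaf_adj_broom lL) spineNl).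
have le_kq := ltnW lt_kq.
by rewrite -[b]/(spine 0) dist_spine // subn0 sub0n addn0.
Qed.

Lemma dist_leaves l l' : l \in L -> l' \in L -> l != l' -> d l l' = 2.
Proof.
move=> lL l'L lNl'; rewrite (dist_leaf e_irr e_sym e_conn (leaves_leaf l'L) (leaf_adj_broom l'L) lNl').
by rewrite dist_sym // -[b]/(spine 0) (dist_spine_leaf depth_broom_gt0 lL).
Qed.

Local Notation P := ((fun k : 'I_q => spine k) @: setT).

Lemma broom_partition : C = P :|: L.
Proof.
apply/setP => w; rewrite in_setU; apply/idP/orP => [wC | [/imsetP [k _ ->] | ]].
- have [w_leaf | wNleaf] := boolP (leaf e w); first by right; rewrite inE wC.
  by have [k lt_kq ->] := nonleaf_spine wC wNleaf; left; apply/imsetP; exists (Ordinal lt_kq).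
- exact: spine_in.
- by rewrite inE => /andP [].
Qed.

Lemma sum_broom (F : T -> nat) :
  \sum_(w in C) F w = \sum_(k < q) F (spine k) + \sum_(l in L) F l.
Proof.
have PL : [disjoint P & L].
  rewrite disjoint_subset; apply/subsetP => w /imsetP [k _ ->].
  by rewrite !inE negb_and spine_nonleaf ?orbT.
rewrite (eq_bigl [predU P & L]) => [|w]; last by rewrite /= {1}broom_partition in_setU.
rewrite bigU // big_imset => [|i j _ _ /(congr1 depth)].
  by congr (_ + _); apply: eq_bigl => k; rewrite in_setT.
rewrite !depth_spine ?(ltnW (ltn_ord _)) // => eq_ij.
by apply: ord_inj; have := ltn_ord i; have := ltn_ord j; lia.
Qed.

Lemma card_broom : #|C| = q + #|L|.
Proof. by rewrite -[#|C|]sum1_card sum_broom sum1_card big_const_ord iter_addn_0 mul1n. Qed.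

Lemma sum_depth_broom : 2 * \sum_(w in C) depth w = q.+1 * (q + 2 * #|L|).
Proof.
rewrite sum_broom (eq_bigr (fun k : 'I_q => q - k)) => [|k _]; last by rewrite depth_spine 1?ltnW.
rewrite [X in _ + X](eq_bigr (fun _ => q.+1)) => [|l lL]; last by rewrite depth_leaf.
by rewrite sum_nat_const mulnDr sum_ord_rsub; lia.
Qed.

Lemma sum_dist_broom_vertex : 2 * \sum_(w in C) d b w + q = q * q + 2 * #|L|.
Proof.
rewrite sum_broom (eq_bigr (fun k : 'I_q => k : nat)) => [|k _]; last first.
  by have := @dist_spine 0 k (leq0n q) (ltnW (ltn_ord k)); rewrite /= sub0n subn0.
rewrite [X in 2 * (_ + X)](eq_bigr (fun _ => 1)) => [|l lL]; last first.
  exact: (dist_spine_leaf depth_broom_gt0 lL).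
by rewrite sum1_card mulnDr addnAC sum_ord_id.
Qed.

Lemma sum_dist_leaves l : l \in L -> \sum_(l' in L) d l l' = 2 * #|L|.-1.
Proof.
move=> lL; apply: (sum_offdiag_const lL (dist_xx _ _)) => l' l'L l'Nl.
by rewrite eq_sym in l'Nl; rewrite dist_leaves.
Qed.

Lemma sum_dist_broom_pairs :
  3 * \sum_(w in C) \sum_(w' in C) d w w' + q + 6 * #|L|
  = q ^ 3 + 3 * #|L| * (q * q.+1) + 6 * #|L| ^ 2.
Proof.
have spine_row (k : 'I_q) :
    \sum_(w in C) d (spine k) w = \sum_(j < q) ((k - j) + (j - k)) + #|L| * k.+1.
  rewrite sum_broom [X in _ + X](eq_bigr (fun _ => k.+1)) => [|l lL]; last exact: dist_spine_leaf.
  by rewrite sum_nat_const; congr (_ + _); apply: eq_bigr => j _; rewrite dist_spine // ltnW.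
have leaf_row l : l \in L -> \sum_(w in C) d l w = \sum_(k < q) k.+1 + 2 * #|L|.-1.
  move=> lL; rewrite sum_broom sum_dist_leaves //; congr (_ + _).
  by apply: eq_bigr => k _; rewrite dist_sym // dist_spine_leaf.
rewrite sum_broom (eq_bigr _ (fun k _ => spine_row k)) (eq_bigr _ leaf_row).
rewrite big_split /= sum_nat_const -big_distrr /=.
have := sum_ord_distn q; have := sum_ord_succ q.
set S := \sum_(k < q) \sum_(j < q) _; set S1 := \sum_(k < q) k.+1.
by case: #|L| => [|t]; rewrite /=; nia.
Qed.

Lemma broom_sums :
  [/\ #|C| = q + #|L|,
      2 * \sum_(w in C) depth w = q.+1 * (q + 2 * #|L|),
      2 * \sum_(w in C) d b w + q = q * q + 2 * #|L|
    & 3 * \sum_(w in C) \sum_(w' in C) d w w' + q + 6 * #|L|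
      = q ^ 3 + 3 * #|L| * (q * q.+1) + 6 * #|L| ^ 2].
Proof.
split; [exact: card_broom | exact: sum_depth_broom | exact: sum_dist_broom_vertex |].
exact: sum_dist_broom_pairs.
Qed.

End Broom.

Lemma broom_of_leaf_adj (T : finType) (e : rel T) (x v l z : T) :
  is_tree e -> ~~ leaf e x -> v != x -> one_broom e (component e x v) ->
  l \in leaves e (component e x v) -> e l z ->
  z \in component e x v /\ broom e z.
Proof.
move=> e_tree xNleaf vNx C_broom lL lz; move/eqP/cards1P: (C_broom) => [b bP].
have : b \in [set w in component e x v | broom e w] by rewrite bP set11.
rewrite inE => /andP [bC b_broom].
by rewrite (leaf_adj_eq (leaves_leaf lL) lz (leaf_adj_broom e_tree xNleaf vNx C_broom bC b_broom lL)).
Qed.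

Definition dist_sum (T : finType) (e : rel T) : nat := \sum_u \sum_v dist e u v.

Lemma sum_sym_even (I : Type) (s : seq I) (f : I -> I -> nat) :
  (forall u v, f u v = f v u) -> (forall u, f u u = 0) ->
  ~~ odd (\sum_(u <- s) \sum_(v <- s) f u v).
Proof.
move=> f_sym f_diag; elim: s => [|w s IHs]; first by rewrite big_nil.
rewrite big_cons big_cons f_diag add0n.
under [X in _ + X]eq_bigr do rewrite big_cons f_sym.
by rewrite big_split /= addnA addnn oddD odd_double.
Qed.

Section Wiener.
Variable T : finType.
Implicit Types e f : rel T.

Lemma dist_sum_even e : symmetric e -> ~~ odd (dist_sum e).
Proof. by move=> e_sym; apply: sum_sym_even => [u v | u]; [exact: dist_sym | exact: dist_xx]. Qed.

Lemma wiener_leE e f : symmetric e -> symmetric f ->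
  (wiener f <= wiener e) = (dist_sum f <= dist_sum e).
Proof.
move=> e_sym f_sym; rewrite /wiener -leq_double !divn2.
by rewrite -[in RHS](odd_double_half (dist_sum e)) -[in RHS](odd_double_half (dist_sum f))
  (negbTE (dist_sum_even e_sym)) (negbTE (dist_sum_even f_sym)).
Qed.

Lemma dist_sum_split e (A : {set T}) : symmetric e ->
  dist_sum e = \sum_(u in A) \sum_(v in A) dist e u v
             + 2 * \sum_(u in A) \sum_(v in ~: A) dist e u v
             + \sum_(u in ~: A) \sum_(v in ~: A) dist e u v.
Proof.
move=> e_sym; have splitA (F : T -> nat) : \sum_u F u = \sum_(u in A) F u + \sum_(u in ~: A) F u.
  by rewrite (bigID (mem A)) /=; congr (_ + _); apply: eq_bigl => u; rewrite inE.
rewrite /dist_sum splitA; under eq_bigr do rewrite splitA.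
under [X in _ + X]eq_bigr do rewrite splitA.
rewrite !big_split /= [X in _ + (X + _)]exchange_big /=.
under [X in _ + (X + _)]eq_bigr do under eq_bigr do rewrite dist_sym //.
by rewrite mul2n -addnn !addnA.
Qed.

End Wiener.

Section Separation.
Variables (T : finType) (e : rel T) (A : {set T}) (x : T).
Hypotheses (e_irr : irreflexive e) (e_sym : symmetric e) (e_conn : connected e).
Hypothesis A_sep : forall a z, a \in A -> z \notin A -> e a z -> z = x.
Local Notation d := (dist e).

Lemma dist_cut a u : a \in A -> u \notin A -> d a u = d a x + d x u.
Proof.
move=> aA uNA; apply/eqP; rewrite eqn_leq dist_triangle ?connect_dist_lt //=.
pose f w := if w \in A then d a w else d a x + d x w.
have := dist_lipschitz (f := f) _ (connect_dist_lt (e_conn a u)).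
rewrite /f aA (negbTE uNA) dist_xx; apply=> c z cz.
have [cA | cNA] := boolP (c \in A); have [zA | zNA] := boolP (z \in A).
- exact: dist_edge.
- have zx := A_sep cA zNA cz.
  by rewrite zx in cz *; rewrite dist_xx addn0 dist_edge.
- have cx : c = x by apply: A_sep zA cNA _; rewrite e_sym.
  by rewrite cx in cz *; rewrite dist_xx addn0 dist_edge.
- by rewrite -addnS leq_add2l dist_edge.
Qed.

Lemma sum_dist_cut a (D : {set T}) : a \in A -> D \subset ~: A ->
  \sum_(u in D) d a u = #|D| * d a x + \sum_(u in D) d x u.
Proof.
move=> aA /subsetP DNA; rewrite -sum_nat_const -big_split /=.
by apply: eq_bigr => u /DNA; rewrite inE; exact: dist_cut.
Qed.

Lemma sum_dist_across :
  \sum_(a in A) \sum_(u in ~: A) d a u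
  = #|~: A| * \sum_(a in A) d x a + #|A| * \sum_(u in ~: A) d x u.
Proof.
rewrite big_distrr -[#|A| * _]sum_nat_const -big_split /=; apply: eq_bigr => a aA.
by rewrite sum_dist_cut ?subxx // [d a x]dist_sym.
Qed.

Variable b : T.
Hypothesis bNA : b \notin A.
Local Notation e' := (move_tree e A b).

Lemma move_tree_in a c : a \in A -> e' a c = (c == b).
Proof. by move=> aA; rewrite /move_tree /= aA. Qed.

Lemma move_tree_out a c : a \notin A -> c \notin A -> e' a c = e a c.
Proof. by move=> aNA cNA; rewrite /move_tree /= (negbTE aNA) (negbTE cNA). Qed.

Lemma move_tree_sym : symmetric e'.
Proof.
move=> a c; rewrite /move_tree /=.
case: (boolP (a \in A)) => aA; case: (boolP (c \in A)) => cA //.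
by rewrite !(introF eqP) // => eq_b; move: bNA; rewrite -eq_b ?aA ?cA.
Qed.

Lemma dist_move_out u v : u \notin A -> v \notin A -> dist e' u v = d u v.
Proof.
move=> uNA vNA.
have le_d'd : dist e' u v <= d u v.
  pose f w := if w \in A then (dist e' u x).+1 else dist e' u w.
  have := dist_lipschitz (f := f) _ (connect_dist_lt (e_conn u v)).
  rewrite /f (negbTE uNA) (negbTE vNA) dist_xx; apply=> c z cz.
  have [cA | cNA] := boolP (c \in A); have [zA | zNA] := boolP (z \in A) => //.
  - by rewrite (A_sep cA zNA cz) leqW.
  - by rewrite e_sym in cz; rewrite (A_sep zA cNA cz).
  - by rewrite dist_edge // move_tree_out.
apply/eqP; rewrite eqn_leq le_d'd /=.
pose f w := if w \in A then (d u b).+1 else d u w.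
have := dist_lipschitz (e := e') (f := f) _ (leq_ltn_trans le_d'd (connect_dist_lt (e_conn u v))).
rewrite /f (negbTE uNA) (negbTE vNA) dist_xx; apply=> c z.
have [cA | cNA] := boolP (c \in A).
  by rewrite move_tree_in // => /eqP ->; rewrite (negbTE bNA) -addn2 leq_addr.
have [zA | zNA] := boolP (z \in A); last by rewrite move_tree_out // => /dist_edge.
by rewrite move_tree_sym move_tree_in // => /eqP ->.
Qed.

Lemma move_tree_irr : irreflexive e'.
Proof.
move=> a; rewrite /move_tree /=; case: ifP => [aA | ->]; last exact: e_irr.
by apply: contraNF bNA => /eqP <-.
Qed.

Lemma move_tree_adj c : c \in A -> e' c b.
Proof. by move=> cA; rewrite move_tree_in. Qed.

Lemma move_tree_leaf c : c \in A -> leaf e' c.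
Proof.
move=> cA; rewrite /leaf /deg (_ : [set y | e' c y] = [set b]) ?cards1 //.
by apply/setP => z; rewrite !inE move_tree_in.
Qed.

Lemma move_tree_connected : connected e'.
Proof.
suff from_b w : connect e' b w.
  by move=> u w; apply: connect_trans (from_b w); rewrite (sym_connect_sym move_tree_sym).
have [wA | wNA] := boolP (w \in A).
  by apply: connect1; rewrite move_tree_sym move_tree_adj.
apply: ball_connect (ball_dist _); rewrite dist_move_out //.
exact: connect_dist_lt.
Qed.

Lemma dist_move_in_out c u : c \in A -> u \notin A -> dist e' c u = (d b u).+1.
Proof.
move=> cA uNA; rewrite dist_sym; last exact: move_tree_sym.
have uNc : u != c by apply: contraNneq uNA => ->.
rewrite (dist_leaf move_tree_irr move_tree_sym move_tree_connected (move_tree_leaf cA)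
  (move_tree_adj cA) uNc).
by rewrite dist_move_out // dist_sym.
Qed.

Lemma dist_move_in c c' : c \in A -> c' \in A -> c != c' -> dist e' c c' = 2.
Proof.
move=> cA c'A cNc'.
have dist_leaf' := dist_leaf move_tree_irr move_tree_sym move_tree_connected.
have bNc : b != c by apply: contraNneq bNA => ->.
rewrite (dist_leaf' _ _ _ (move_tree_leaf c'A) (move_tree_adj c'A) cNc').
rewrite dist_sym; last exact: move_tree_sym.
by rewrite (dist_leaf' _ _ _ (move_tree_leaf cA) (move_tree_adj cA) bNc) dist_xx.
Qed.

Local Notation S_in := (\sum_(u in A) \sum_(v in A) d u v).
Local Notation S_out := (\sum_(u in ~: A) \sum_(v in ~: A) d u v).

Lemma dist_sum_separated :
  dist_sum e = S_in + 2 * (#|~: A| * \sum_(a in A) d x a + #|A| * \sum_(u in ~: A) d x u) + S_out.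
Proof. by rewrite (dist_sum_split A e_sym) sum_dist_across. Qed.

Lemma dist_sum_move :
  dist_sum e' = 2 * (#|A| * (#|A|.-1 + (#|~: A| + \sum_(u in ~: A) d b u))) + S_out.
Proof.
rewrite (dist_sum_split A move_tree_sym).
have -> : \sum_(u in ~: A) \sum_(v in ~: A) dist e' u v = S_out.
  apply: eq_bigr => u; rewrite inE => uNA.
  by apply: eq_bigr => v; rewrite inE; exact: dist_move_out.
have -> : \sum_(u in A) \sum_(v in A) dist e' u v = #|A| * (2 * #|A|.-1).
  rewrite -sum_nat_const; apply: eq_bigr => c cA.
  apply: (sum_offdiag_const cA (dist_xx _ _)) => c' c'A c'Nc.
  by rewrite eq_sym in c'Nc; rewrite dist_move_in.
have -> : \sum_(u in A) \sum_(v in ~: A) dist e' u v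
          = #|A| * (#|~: A| + \sum_(u in ~: A) d b u).
  rewrite -sum_nat_const; apply: eq_bigr => c cA.
  rewrite addnC -sum1_card -big_split /=; apply: eq_bigr => u; rewrite inE => uNA.
  by rewrite dist_move_in_out // addn1.
by rewrite mulnDr; congr (_ + _); lia.
Qed.

Lemma wiener_move_leE : (wiener e' <= wiener e) =
  (2 * (#|A| * (#|A|.-1 + (#|~: A| + \sum_(u in ~: A) d b u)))
   <= S_in + 2 * (#|~: A| * \sum_(a in A) d x a + #|A| * \sum_(u in ~: A) d x u)).
Proof.
rewrite wiener_leE //; last exact: move_tree_sym.
by rewrite dist_sum_move dist_sum_separated leq_add2r.
Qed.

End Separation.

Lemma broom_move_balance q t r SA DA DC BC XR : 0 < q ->
  3 * SA + q + 6 * t = q ^ 3 + 3 * t * (q * q.+1) + 6 * t ^ 2 ->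
  2 * DA = q.+1 * (q + 2 * t) ->
  2 * DC = q.+1 * (q + 2 * t.+1) ->
  2 * BC + q = q * q + 2 * t.+1 ->
  (2 * ((q + t) * ((q + t).-1 + ((q + t.+1 + r) + (BC + (r * q + XR)))))
     <= SA + 2 * ((q + t.+1 + r) * DA + (q + t) * (DC + XR)))
  = (q.+1 * (3 * (q + t + (q + t.+1 + r)) + 2 * q) <= 12 * (q + t) * (q + t).+1 + 5 * q.+1).
Proof.
(* 3 (Y - X) = q (V - U); after scaling the closed forms for DA, DC and BC by
   their coefficients this identity is linear in the unknown sums. *)
move=> q_gt0 hSA hDA hDC hBC; rewrite -[in RHS](leq_pmul2l q_gt0).
set X := 2 * _; set Y := SA + _; set U := q.+1 * _; set V := 12 * _ * _ + _.
have balance : 3 * Y + q * U = 3 * X + q * V.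
  rewrite {}/X {}/Y {}/U {}/V; case: q q_gt0 hSA hDA hDC hBC => // q _ hSA hDA hDC hBC.
  have := congr1 (muln (q.+1 + t.+1 + r)) hDA.
  have := congr1 (muln (q.+1 + t)) hDC.
  have := congr1 (muln (q.+1 + t)) hBC.
  by rewrite addSn /=; lia.
by apply/idP/idP; lia.
Qed.

Section TwoBrooms.
Variables (T : finType) (e : rel T) (x v1 v2 b1 b2 : T).
Hypotheses (e_tree : is_tree e) (xNleaf : ~~ leaf e x) (v1Nx : v1 != x) (v2Nx : v2 != x).
Local Notation C1 := (component e x v1).
Local Notation C2 := (component e x v2).
Hypotheses (C12 : C1 != C2) (C1_broom : one_broom e C1) (C2_broom : one_broom e C2).
Hypotheses (b1C1 : b1 \in C1) (b1_broom : broom e b1).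
Hypotheses (b2C2 : b2 \in C2) (b2_broom : broom e b2).
Hypotheses (depth_b12 : dist e x b1 = dist e x b2).
Hypothesis leaves_C12 : #|leaves e C1| = (#|leaves e C2|).+1.
Local Notation q := (dist e x b1).
Local Notation t := #|leaves e C2|.
Local Notation R := (~: C2 :\: C1).

Let e_irr : irreflexive e. Proof. by case: e_tree => [[]]. Qed.
Let e_sym : symmetric e. Proof. by case: e_tree => [[]]. Qed.
Let e_conn : connected e. Proof. by case: e_tree. Qed.

Lemma components_disjoint : C1 \subset ~: C2.
Proof.
apply/subsetP => w wC1; rewrite inE; apply: contra C12 => wC2.
by rewrite -(component_eq e_sym wC1) (component_eq e_sym wC2).
Qed.

Lemma sum_out_C2 (F : T -> nat) :
  \sum_(u in ~: C2) F u = \sum_(u in C1) F u + \sum_(u in R) F u.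
Proof. by rewrite (big_setID C1) (setIidPr components_disjoint). Qed.

Lemma wiener_move_broom_leE :
  (wiener (move_tree e C2 b1) <= wiener e)
  = (q.+1 * (3 * #|T| + 2 * q) <= 12 * (q + t) * (q + t).+1 + 5 * q.+1).
Proof.
have b1N2 : b1 \notin C2 by rewrite -in_setC (subsetP components_disjoint).
rewrite (wiener_move_leE e_irr e_sym e_conn (component_separates v2Nx) b1N2).
have RN1 : R \subset ~: C1 by rewrite setDE subsetIr.
rewrite !sum_out_C2 (sum_dist_cut e_sym e_conn (component_separates v1Nx) b1C1 RN1).
have [card1 depth1 vertex1 _] := broom_sums e_tree xNleaf v1Nx C1_broom b1C1 b1_broom.
have [card2 depth2 _ pairs2] := broom_sums e_tree xNleaf v2Nx C2_broom b2C2 b2_broom.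
rewrite -depth_b12 in card2 depth2 pairs2; rewrite leaves_C12 in card1 depth1 vertex1.
have cardN : #|~: C2| = q + t.+1 + #|R|.
  by rewrite -(cardsID C1 (~: C2)) (setIidPr components_disjoint) card1.
rewrite -(cardsC C2) cardN card2 [dist e b1 x]dist_sym //.
by apply: broom_move_balance; first exact: (depth_broom_gt0 v1Nx b1C1).
Qed.

End TwoBrooms.

Local Open Scope ring_scope.

Lemma sqrt_threshold_leE (R : rcfType) (q t n : nat) :
  (Num.sqrt (((q.+1)%:R * (3 * n%:R + 2 * (q.+1)%:R - 7) + 3) / 12) - (q.+1)%:R + 3 / 2
     <= (t.+1)%:R :> R)
  = (q.+1 * (3 * n + 2 * q) <= 12 * (q + t) * (q + t).+1 + 5 * q.+1)%N.
Proof.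
(* Both sides say alpha <= beta ^ 2, as 12 (beta ^ 2 - alpha) is the difference
   of the two sides of the integer inequality. *)
set alpha := (_ / 12); pose beta : R := (q + t)%:R + 1 / 2.
have beta_ge0 : 0 <= beta by rewrite /beta; have := ler0n R (q + t); lra.
have -> : (Num.sqrt alpha - (q.+1)%:R + 3 / 2 <= (t.+1)%:R) = (Num.sqrt alpha <= beta).
  have q1 : (q.+1)%:R = q%:R + 1 :> R by rewrite -natr1.
  have t1 : (t.+1)%:R = t%:R + 1 :> R by rewrite -natr1.
  by rewrite /beta natrD q1 t1; apply/idP/idP => ?; lra.
rewrite -[X in _ <= X]ger0_norm // -sqrtr_sqr ler_sqrt ?sqr_ge0 // -(ler_nat R) -subr_ge0.
have -> : (12 * (q + t) * (q + t).+1 + 5 * q.+1)%:R - (q.+1 * (3 * n + 2 * q))%:R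
          = 12 * (beta ^+ 2 - alpha) :> R.
  by rewrite /beta /alpha; field.
by rewrite pmulr_rge0 ?subr_ge0.
Qed.

Theorem mainTheorem7 (R : rcfType) (T : finType) (e : rel T)
    (x y1 y2 y1' : T) (C1 C2 : {set T}) :
  max_wiener e ->
  special e x ->
  is_component e x C1 -> is_component e x C2 -> C1 != C2 ->
  one_broom e C1 -> one_broom e C2 ->
  (forall y y', y \in leaves e C1 -> y' \in leaves e C2 ->
     (dist e y y' < diameter e)%N) ->
  y1 \in leaves e C1 -> y2 \in leaves e C2 ->
  e y1 y1' ->
  dist e x y1 = dist e x y2 ->
  #|leaves e C1| = (#|leaves e C2|).+1 ->
  ((wiener (move_tree e C2 y1') <= wiener e)%N <->
   Num.sqrt (((dist e x y1)%:R * (3 * (#|T|)%:R + 2 * (dist e x y1)%:R - 7) + 3) / 12)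
     - (dist e x y1)%:R + 3 / 2 <= (#|leaves e C1|)%:R :> R).
Proof.
move=> [e_tree _] [deg_x _] [v1 v1Nx ->] [v2 v2Nx ->] C12 C1_broom C2_broom _.
move=> y1L y2L y1b1 depth_y12 leaves_C12.
have xNleaf : ~~ leaf e x by apply: contraTN deg_x => /eqP ->.
have [b1C1 b1_broom] := broom_of_leaf_adj e_tree xNleaf v1Nx C1_broom y1L y1b1.
have [b2 y2b2] := leaf_adj (leaves_leaf y2L).
have [b2C2 b2_broom] := broom_of_leaf_adj e_tree xNleaf v2Nx C2_broom y2L y2b2.
have depth_y1 := depth_leaf e_tree xNleaf v1Nx C1_broom b1C1 b1_broom y1L.
have depth_y2 := depth_leaf e_tree xNleaf v2Nx C2_broom b2C2 b2_broom y2L.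
have depth_b12 : dist e x y1' = dist e x b2 by apply: succn_inj; rewrite -depth_y1 -depth_y2.
rewrite (wiener_move_broom_leE e_tree xNleaf v1Nx v2Nx C12 C1_broom C2_broom b1C1 b1_broom
  b2C2 b2_broom depth_b12 leaves_C12).
by rewrite depth_y1 leaves_C12 sqrt_threshold_leE.
Qed.
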